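(* Let $\sigma\in(0,1)$. In the setting described in the context, there are $B_h>0$, $h\le H+G$, such that for all sufficiently large $T$ and every $h\le H+G$, \[ (-1)^{\mathrm{j}(h)}\sum_p\frac{\mathrm{Re}\left(\overline{r(p)}a_{L_h}(p)\right)}{(1+|r(p)|^2)p^\sigma}\le-B_h\frac{(\log T)^{1-\sigma}}{\log\log T}, \] where $\mathrm{j}(h)=1$ if $h\le H$ and $\mathrm{j}(h)=0$ if $H<h\le H+G$. For $\sigma=1$ the same holds with the right-hand side replaced by $-B_h\log\log\log T$.
   Context: $\mathcal{S}_{\text{poly}}$: Dirichlet series $L(s)=\sum a_L(n)n^{-s}$, $a_L(1)=1$, absolutely convergent for $\mathrm{Re}\,s>1$, with $(s-1)^mL(s)$ entire of finite order, functional equation $L(s)\gamma(s)=\omega\overline{\gamma(1-\bar s)L(1-\bar s)}$, $\gamma(s)=Q^s\prod_k\Gamma(\lambda_ks+\mu_k)$, and Euler product $\prod_p\prod_{j\le\partial_L}(1-a_{L,j}(p)p^{-s})^{-1}$ with $a_{L,j}(p)\ll p^{\theta_L}$, $\theta_L<1/4$; Ramanujan Hypothesis: $a_L(n)\ll_\epsilon n^\epsilon$. Setting: integers $H,G\ge0$; $L_1,\dots,L_{H+G}\in\mathcal{S}_{\text{poly}}$ satisfying the Ramanujan Hypothesis with $\frac{\log x}{x}\sum_{p\le x}a_{L_h}(p)\overline{a_{L_g}(p)}\to\kappa(h,g)$, $\kappa(h,h)>0$, $\kappa(h,g)=0$ for $h\ne g$. Fix $\alpha\in(0,1)$, $0<\beta<\alpha/2$,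 a sufficiently small $\epsilon>0$, a sufficiently large constant $C$, and $x_\epsilon$ large enough that for $x\ge x_\epsilon$ and all $h$: $|\sum_{p\le x}|a_{L_h}(p)|^2-\kappa(h,h)\frac{x}{\log x}|\le\frac{\epsilon x}{\log x}$ and $|\sum_{g\ne h}\sum_{p\le x}a_{L_h}(p)a_{L_g}(p)|\le\frac{\epsilon x}{\log x}$. $r(p)$ is defined for primes by $Cr(p)=\sum_{h\le H}a_{L_h}(p)-\sum_{H<h\le H+G}a_{L_h}(p)$ if $x_\epsilon\le p\le\beta\log T$ and $r(p)=0$ otherwise. *)

From Stdlib Require Import Reals Lra List.
From Coquelicot Require Import Coquelicot.
From mathcomp Require prime.
Open Scope R_scope.

Fixpoint cpow (z : C) (n : nat) : C :=
  match n with O => RtoC 1 | S m => Cmult z (cpow z m) end.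

Fixpoint csum0 (f : nat -> C) (k : nat) : C :=
  match k with O => f O | S m => Cplus (csum0 f m) (f (S m)) end.

Fixpoint csum1 (f : nat -> C) (n : nat) : C :=
  match n with O => RtoC 0 | S m => Cplus (csum1 f m) (f (S m)) end.

Fixpoint cpsum (f : nat -> C) (N : nat) : C :=
  match N with
  | O => RtoC 0
  | S m => Cplus (cpsum f m) (if prime.prime (S m) then f (S m) else RtoC 0)
  end.
Fixpoint rpsum (f : nat -> R) (N : nat) : R :=
  match N with
  | O => 0
  | S m => rpsum f m + (if prime.prime (S m) then f (S m) else 0)
  end.

(* floor of a real as a nat (0 for negative reals) *)
Definition nfloor (x : R) : nat := Z.to_nat (Int_part x).

Definition cprimesum (f : nat -> C) (x : R) : C := cpsum f (nfloor x).
Definition rprimesum (f : nat -> R) (x : R) : R := rpsum f (nfloor x).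

(* complete homogeneous symmetric polynomial h_k(x_1,...,x_d) *)
Fixpoint hcomp (l : list C) (k : nat) : C :=
  match l with
  | nil => match k with O => RtoC 1 | _ => RtoC 0 end
  | x :: xs => csum0 (fun i => Cmult (cpow x i) (hcomp xs (k - i))) k
  end.

(* The arithmetic part of the axioms of S_poly for L(s) = sum a(n) n^-s:
   a(1) = 1, absolute convergence for Re s > 1, and the Euler product
   prod_p prod_{j <= d} (1 - alpha_j(p) p^-s)^-1 with alpha_j(p) << p^theta,
   theta < 1/4, written at the level of coefficients (a multiplicative,
   a(p^k) = h_k(alpha_1(p),...,alpha_d(p))). *)
Definition Spoly_arith (a : nat -> C) : Prop :=
  a 1%nat = RtoC 1 /\
  (forall s : R, 1 < s ->
     ex_series (fun n : nat => Cmod (a (S n)) / Rpower (INR (S n)) s)) /\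
  exists (d : nat) (theta K : R) (alpha : nat -> nat -> C),
    theta < 1/4 /\
    (forall j p, (1 <= j <= d)%nat -> prime.prime p = true ->
        Cmod (alpha j p) <= K * Rpower (INR p) theta) /\
    (forall m n, (1 <= m)%nat -> (1 <= n)%nat -> Nat.gcd m n = 1%nat ->
        a (m * n)%nat = Cmult (a m) (a n)) /\
    (forall p k, prime.prime p = true ->
        a (p ^ k)%nat = hcomp (map (fun j => alpha j p) (seq 1 d)) k).

Definition Ramanujan (a : nat -> C) : Prop :=
  forall eps : R, 0 < eps -> exists K : R,
    forall n : nat, (1 <= n)%nat -> Cmod (a n) <= K * Rpower (INR n) eps.

Definition prime_corr_limit (a b : nat -> C) (k : C) : Prop :=
  forall e : R, 0 < e -> exists X : R, forall x : R, X <= x ->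
    Cmod (Cminus (Cmult (RtoC (ln x / x))
                        (cprimesum (fun p => Cmult (a p) (Cconj (b p))) x)) k) < e.

Definition good_xeps (H G : nat) (a : nat -> nat -> C) (kappa : nat -> nat -> C)
    (eps xe : R) : Prop :=
  forall x : R, xe <= x -> forall h : nat, (1 <= h <= H + G)%nat ->
    Rabs (rprimesum (fun p => (Cmod (a h p)) ^ 2) x - Re (kappa h h) * (x / ln x))
      <= eps * x / ln x /\
    Cmod (csum1 (fun g => if Nat.eqb g h then RtoC 0
                          else cprimesum (fun p => Cmult (a h p) (Cconj (a g p))) x)
                (H + G))
      <= eps * x / ln x.

Definition rcoef (H G : nat) (a : nat -> nat -> C) (Cc xe beta T : R) (p : nat) : C :=
  if Rle_dec xe (INR p) then
    if Rle_dec (INR p) (beta * ln T) then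
      Cmult (RtoC (/ Cc))
        (csum1 (fun h => if Nat.leb h H then a h p else Copp (a h p)) (H + G))
    else RtoC 0
  else RtoC 0.

(* sum_p Re(conj(r(p)) a_h(p)) / ((1 + |r(p)|^2) p^sigma); the terms vanish
   for p > beta log T, so the sum over all primes is this finite sum. *)
Definition Ssum (H G : nat) (a : nat -> nat -> C) (Cc xe beta T : R)
    (h : nat) (sigma : R) : R :=
  rprimesum (fun p =>
      let r := rcoef H G a Cc xe beta T p in
      Re (Cmult (Cconj r) (a h p)) / ((1 + (Cmod r) ^ 2) * Rpower (INR p) sigma))
    (beta * ln T).

Definition jsign (H h : nat) : R := if Nat.leb h H then -1 else 1.

From Pilot Require Import Defs.
From Stdlib Require Import Reals Lra Lia List ZArith FunctionalExtensionality.
From Coquelicot Require Import Coquelicot.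
From mathcomp Require prime.
Open Scope R_scope.

(* Above [x_eps], [C r(p)] is the signed sum of the [a_g(p)], so
   [(-1)^j(h) Re(conj(r(p)) a_h(p)) = - Q_h(p) / C] with
   [Q_h(p) = sum_g (+-) Re(conj(a_g(p)) a_h(p))], whose prime density is [kappa(h,h)]
   by orthogonality.  The Ramanujan hypothesis applied to the Euler factors forces
   the local roots to have modulus at most 1, so the [a_g(p)] are bounded and
   [|r(p)|^2 = O(1 / C^2)]: for [C] large the denominator [1 + |r(p)|^2] costs only a
   small part of the main term.  Abel summation against the densities gives
   [sum_{p <= N} Q_h(p) p^-sigma ~ kappa(h,h) Psi_sigma(N)], and with
   [N = beta log T], [Psi_sigma(N) >> (log T)^(1-sigma) / log log T] for [sigma < 1]
   and [Psi_1(N) >> log log log T]. *)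

(** * Roots of the local Euler factors *)

(* In generating-function terms, [geom_conv x] multiplies by [1 / (1 - x t)] and
   [geom_diff y] multiplies by [1 - y t]; [hcomp l] is the coefficient sequence of
   the product of the [1 / (1 - x t)], [x] in [l]. *)
Definition geom_conv (x : C) (u : nat -> C) (k : nat) : C :=
  csum0 (fun i => Cmult (cpow x i) (u (k - i)%nat)) k.

Definition geom_diff (y : C) (v : nat -> C) (k : nat) : C :=
  match k with O => v O | S k' => Cminus (v k) (Cmult y (v k')) end.

Definition delta (k : nat) : C := match k with O => RtoC 1 | _ => RtoC 0 end.

Lemma csum0_ext f g k : (forall i, (i <= k)%nat -> f i = g i) -> csum0 f k = csum0 g k.
Proof.
  induction k as [|k IH]; intros Hfg; simpl; [apply Hfg; lia|].
  rewrite IH by (intros; apply Hfg; lia). rewrite Hfg by lia. reflexivity.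
Qed.

Lemma csum0_Sl f k : csum0 f (S k) = Cplus (f O) (csum0 (fun i => f (S i)) k).
Proof. induction k as [|k IH]; [reflexivity|]. cbn [csum0] in *. rewrite IH. ring. Qed.

Lemma csum0_scal c f k : csum0 (fun i => Cmult c (f i)) k = Cmult c (csum0 f k).
Proof. induction k as [|k IH]; simpl; [|rewrite IH]; ring. Qed.

Lemma geom_conv_0 x u : geom_conv x u 0 = u O.
Proof. unfold geom_conv; simpl; ring. Qed.

Lemma geom_conv_S x u k : geom_conv x u (S k) = Cplus (u (S k)) (Cmult x (geom_conv x u k)).
Proof.
  unfold geom_conv. rewrite csum0_Sl, <- csum0_scal. simpl cpow. rewrite Nat.sub_0_r.
  f_equal; [ring|]. apply csum0_ext. intros i _. simpl. ring.
Qed.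

Lemma geom_diff_conv x u : geom_diff x (geom_conv x u) = u.
Proof.
  apply functional_extensionality. intros [|k]; simpl.
  - apply geom_conv_0.
  - rewrite geom_conv_S. ring.
Qed.

Lemma geom_diff_conv_comm y x u : geom_diff y (geom_conv x u) = geom_conv x (geom_diff y u).
Proof.
  apply functional_extensionality. intros k. induction k as [|k IH].
  - simpl. rewrite !geom_conv_0. reflexivity.
  - rewrite geom_conv_S, <- IH. destruct k as [|k]; simpl;
      rewrite ?geom_conv_S, ?geom_conv_0; ring.
Qed.

Lemma geom_conv_delta x : geom_conv x delta = cpow x.
Proof.
  apply functional_extensionality. intros k. induction k as [|k IH].
  - rewrite geom_conv_0. reflexivity.
  - rewrite geom_conv_S, IH. simpl. ring.
Qed.

Lemma hcomp_nil : hcomp nil = delta.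
Proof. apply functional_extensionality. intros [|k]; reflexivity. Qed.

Lemma hcomp_cons x l : hcomp (x :: l) = geom_conv x (hcomp l).
Proof. reflexivity. Qed.

Lemma fold_geom_diff_conv ys x u :
  fold_right geom_diff (geom_conv x u) ys = geom_conv x (fold_right geom_diff u ys).
Proof. induction ys as [|y ys IH]; simpl; [|rewrite IH, geom_diff_conv_comm]; reflexivity. Qed.

Lemma fold_geom_diff_hcomp l : fold_right geom_diff (hcomp l) l = delta.
Proof.
  induction l as [|x l IH]; cbn [fold_right]; [apply hcomp_nil|].
  rewrite hcomp_cons, fold_geom_diff_conv, IH. apply geom_diff_conv.
Qed.

Lemma hcomp_annihilated l x :
  In x l -> exists ys, fold_right geom_diff (hcomp l) ys = cpow x.
Proof.
  induction l as [|y l IH]; [intros []|]. intros [<- | Hx].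
  - exists l. rewrite hcomp_cons, fold_geom_diff_conv, fold_geom_diff_hcomp. apply geom_conv_delta.
  - destruct (IH Hx) as [ys Hys]. exists (y :: ys). cbn [fold_right]. rewrite hcomp_cons.
    rewrite fold_geom_diff_conv, geom_diff_conv. exact Hys.
Qed.

Definition geom_bounded (q : R) (v : nat -> C) : Prop :=
  exists K, forall k, Cmod (v k) <= K * q ^ k.

Lemma geom_bounded_diff q y v : 0 < q -> geom_bounded q v -> geom_bounded q (geom_diff y v).
Proof.
  intros Hq [K HK].
  assert (HK0 : 0 <= K) by (specialize (HK O); simpl in HK; pose proof (Cmod_ge_0 (v O)); lra).
  assert (Hy : 0 <= Cmod y / q) by (apply Rdiv_le_0_compat; [apply Cmod_ge_0 | lra]).
  exists (K * (1 + Cmod y / q)). intros [|k]; simpl.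
  - specialize (HK O). simpl in HK. nra.
  - unfold Cminus. eapply Rle_trans; [apply Cmod_triangle|].
    rewrite Cmod_opp, Cmod_mult.
    pose proof (HK (S k)) as HSk. pose proof (HK k) as Hk. simpl in HSk.
    assert (Hqk : 0 < q ^ k) by (apply pow_lt; lra).
    assert (Cmod y * Cmod (v k) <= Cmod y * (K * q ^ k))
      by (apply Rmult_le_compat_l; [apply Cmod_ge_0 | exact Hk]).
    replace (K * (1 + Cmod y / q) * (q * q ^ k))
      with (K * (q * q ^ k) + Cmod y * (K * q ^ k)) by (field; lra).
    lra.
Qed.

Lemma geom_bounded_fold_diff q ys v :
  0 < q -> geom_bounded q v -> geom_bounded q (fold_right geom_diff v ys).
Proof.
  intros Hq Hv. induction ys as [|y ys IH]; [exact Hv|]. now apply geom_bounded_diff.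
Qed.

Lemma Cmod_cpow x k : Cmod (cpow x k) = Cmod x ^ k.
Proof. induction k as [|k IH]; simpl; [apply Cmod_1|]. rewrite Cmod_mult, IH. reflexivity. Qed.

Lemma geom_bounded_cpow_le q x : 0 < q -> geom_bounded q (cpow x) -> Cmod x <= q.
Proof.
  intros Hq [K HK]. apply Rnot_lt_le. intros Hxq.
  assert (Hr : Rabs (Cmod x / q) > 1).
  { rewrite Rabs_pos_eq by (apply Rdiv_le_0_compat; [apply Cmod_ge_0 | lra]).
    apply Rlt_gt, (Rmult_lt_reg_r q); [exact Hq|]. field_simplify; lra. }
  destruct (Pow_x_infinity _ Hr (K + 1)) as [N HN].
  specialize (HN N (le_n N)). specialize (HK N).
  rewrite Cmod_cpow in HK. rewrite Rabs_pos_eq in HN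
    by (apply pow_le, Rdiv_le_0_compat; [apply Cmod_ge_0 | lra]).
  unfold Rdiv in HN. rewrite Rpow_mult_distr, pow_inv in HN.
  assert (HqN : 0 < q ^ N) by (apply pow_lt; lra).
  apply (Rmult_ge_compat_r (q ^ N)) in HN; [|lra].
  rewrite Rmult_assoc, Rinv_l in HN by lra. nra.
Qed.

(* A root [x] of [l] is reached from [hcomp l] by applying the factors
   [1 - y t], [y] the other roots, so geometric growth of [hcomp l] bounds [x]. *)
Lemma hcomp_root_le q l x : 0 < q -> geom_bounded q (hcomp l) -> In x l -> Cmod x <= q.
Proof.
  intros Hq Hl Hx. destruct (hcomp_annihilated l x Hx) as [ys Hys].
  apply geom_bounded_cpow_le; [exact Hq|]. rewrite <- Hys.
  now apply geom_bounded_fold_diff.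
Qed.

Lemma hcomp_0 l : hcomp l 0 = RtoC 1.
Proof. induction l as [|x l IH]; [reflexivity|]. rewrite hcomp_cons, geom_conv_0. exact IH. Qed.

Lemma Cmod_hcomp_1_le l : (forall x, In x l -> Cmod x <= 1) -> Cmod (hcomp l 1) <= INR (length l).
Proof.
  induction l as [|x l IH]; intros Hl.
  - simpl. rewrite Cmod_0. lra.
  - rewrite hcomp_cons, geom_conv_S, geom_conv_0, hcomp_0, Cmult_1_r.
    cbn [length]. rewrite S_INR. eapply Rle_trans; [apply Cmod_triangle|].
    pose proof (IH (fun y Hy => Hl y (or_intror Hy))). pose proof (Hl x (or_introl eq_refl)). lra.
Qed.

Lemma le_1_of_le_Rpower r P : 1 < P -> (forall e, 0 < e -> r <= Rpower P e) -> r <= 1.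
Proof.
  intros HP Hr. apply Rnot_lt_le. intros Hr1.
  assert (HlP : 0 < ln P) by (rewrite <- ln_1; apply ln_increasing; lra).
  assert (Hlr : 0 < ln r) by (rewrite <- ln_1; apply ln_increasing; lra).
  specialize (Hr (ln r / (2 * ln P))). unfold Rpower in Hr.
  replace (ln r / (2 * ln P) * ln P) with (ln r / 2) in Hr by (field; lra).
  assert (Hexp : exp (ln r / 2) < exp (ln r)) by (apply exp_increasing; lra).
  rewrite exp_ln in Hexp by lra.
  assert (He : 0 < ln r / (2 * ln P)) by (apply Rdiv_lt_0_compat; lra).
  specialize (Hr He). lra.
Qed.

Lemma prime_ge2 p : prime.prime p = true -> (2 <= p)%nat.
Proof. intros Hp. destruct p as [|[|p]]; [vm_compute in Hp; discriminate..|lia]. Qed.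

(* Ramanujan's bound on [a (p ^ k) = h_k(alpha_1(p), ...)] forces [|alpha_j(p)| <= 1],
   hence [|a p| = |h_1(alpha(p))| <= d]. *)
Lemma prime_coeff_bounded a : Spoly_arith a -> Ramanujan a ->
  exists D, forall p, prime.prime p = true -> Cmod (a p) <= D.
Proof.
  intros [_ [_ [d [_ [_ [alpha [_ [_ [_ Hpk]]]]]]]]] Hram.
  exists (INR d). intros p Hp.
  assert (HpR : 2 <= INR p) by (apply (le_INR 2), prime_ge2, Hp).
  set (l := map (fun j => alpha j p) (seq 1 d)).
  assert (Hroots : forall x, In x l -> Cmod x <= 1).
  { intros x Hx. apply (le_1_of_le_Rpower _ (INR p)); [lra|]. intros e He.
    destruct (Hram e He) as [K HK].
    apply (hcomp_root_le _ l); [apply exp_pos| |exact Hx].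
    exists K. intros k. unfold l. rewrite <- Hpk by exact Hp.
    eapply Rle_trans; [apply HK, Nat.pow_lower_bound; pose proof (prime_ge2 p Hp); lia|].
    rewrite pow_INR, <- (Rpower_pow k (INR p)) by lra.
    rewrite Rpower_mult, (Rmult_comm (INR k)), <- Rpower_mult.
    rewrite Rpower_pow by apply exp_pos. lra. }
  replace p with (p ^ 1)%nat by apply Nat.pow_1_r. rewrite Hpk by exact Hp.
  replace d with (length l) at 2 by (unfold l; now rewrite length_map, length_seq).
  now apply Cmod_hcomp_1_le.
Qed.

Fixpoint sum_below (F : nat -> R) (N : nat) : R :=
  match N with O => 0 | S n => sum_below F n + F n end.

Lemma sum_below_le F G N :
  (forall m, (m < N)%nat -> F m <= G m) -> sum_below F N <= sum_below G N.
Proof.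
  induction N as [|N IH]; intros HFG; simpl; [lra|].
  pose proof (IH (fun m Hm => HFG m ltac:(lia))). pose proof (HFG N ltac:(lia)). lra.
Qed.

Lemma sum_below_ext F G N :
  (forall m, (m < N)%nat -> F m = G m) -> sum_below F N = sum_below G N.
Proof.
  intros HFG. apply Rle_antisym; apply sum_below_le; intros m Hm; rewrite HFG by exact Hm; lra.
Qed.

Lemma sum_below_plus F G N :
  sum_below (fun m => F m + G m) N = sum_below F N + sum_below G N.
Proof. induction N as [|N IH]; simpl; [|rewrite IH]; lra. Qed.

Lemma sum_below_scal c F N : sum_below (fun m => c * F m) N = c * sum_below F N.
Proof. induction N as [|N IH]; simpl; [|rewrite IH]; lra. Qed.

Lemma sum_below_abs F N : Rabs (sum_below F N) <= sum_below (fun m => Rabs (F m)) N.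
Proof.
  induction N as [|N IH]; simpl; [rewrite Rabs_R0; lra|].
  eapply Rle_trans; [apply Rabs_triang|lra].
Qed.

Lemma sum_below_nonneg F N : (forall m, 0 <= F m) -> 0 <= sum_below F N.
Proof. intros HF. induction N as [|N IH]; simpl; [lra|]. pose proof (HF N). lra. Qed.

Lemma sum_below_mono F M N : (forall m, 0 <= F m) -> (M <= N)%nat -> sum_below F M <= sum_below F N.
Proof. intros HF HMN. induction HMN as [|N _ IH]; simpl; [lra|]. pose proof (HF N). lra. Qed.

Lemma sum_below_truncate F M N :
  sum_below (fun m => if Nat.ltb m M then F m else 0) N = sum_below F (Nat.min N M).
Proof.
  induction N as [|N IH]; [reflexivity|]. cbn [sum_below]. rewrite IH.
  destruct (Nat.ltb_spec N M).
  - replace (Nat.min (S N) M) with (S (Nat.min N M)) by lia.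
    replace (Nat.min N M) with N by lia. reflexivity.
  - replace (Nat.min (S N) M) with M by lia. replace (Nat.min N M) with M by lia. lra.
Qed.

Lemma sum_below_abs_le_eventually t w :
  (forall m, 0 <= w m) -> eventually (fun m => Rabs (t m) <= w m) ->
  exists c, forall N, Rabs (sum_below t N) <= sum_below w N + c.
Proof.
  intros Hw [N0 HN0]. exists (sum_below (fun m => Rabs (t m)) N0). intros N.
  eapply Rle_trans; [apply sum_below_abs|].
  eapply Rle_trans with (sum_below (fun m => w m + (if Nat.ltb m N0 then Rabs (t m) else 0)) N).
  - apply sum_below_le. intros m _. destruct (Nat.ltb_spec m N0) as [Hm | Hm].
    + pose proof (Hw m). lra.
    + pose proof (HN0 m Hm). lra.
  - rewrite sum_below_plus, sum_below_truncate. apply Rplus_le_compat_l.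
    apply sum_below_mono; [intros; apply Rabs_pos | lia].
Qed.

Definition sum_upto (F : nat -> R) (N : nat) : R := sum_below (fun m => F (S m)) N.

Lemma sum_upto_single F N h :
  (1 <= h <= N)%nat -> (forall g, (1 <= g <= N)%nat -> g <> h -> F g = 0) -> sum_upto F N = F h.
Proof.
  induction N as [|N IH]; intros Hh HF; [lia|]. unfold sum_upto in *. cbn [sum_below].
  destruct (Nat.eq_dec h (S N)) as [->|Hne].
  - rewrite (sum_below_ext _ (fun _ => 0 * 0)) by (intros m Hm; rewrite HF by lia; ring).
    rewrite sum_below_scal. ring.
  - rewrite IH, (HF (S N)) by (lia || intros; apply HF; lia). lra.
Qed.

Lemma rpsum_ext F G N : (forall p, prime.prime p = true -> F p = G p) -> rpsum F N = rpsum G N.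
Proof.
  intros HFG. induction N as [|N IH]; simpl; [reflexivity|]. rewrite IH.
  destruct (prime.prime (S N)) eqn:Hp; [rewrite HFG by exact Hp|]; reflexivity.
Qed.

Lemma rpsum_le F G N :
  (forall p, prime.prime p = true -> (p <= N)%nat -> F p <= G p) -> rpsum F N <= rpsum G N.
Proof.
  induction N as [|N IH]; intros HFG; simpl; [lra|].
  pose proof (IH (fun p Hp HpN => HFG p Hp ltac:(lia))).
  destruct (prime.prime (S N)) eqn:Hp; [pose proof (HFG (S N) Hp (le_n _))|]; lra.
Qed.

Lemma rpsum_plus F G N : rpsum (fun p => F p + G p) N = rpsum F N + rpsum G N.
Proof. induction N as [|N IH]; simpl; [lra|]. rewrite IH. destruct (prime.prime (S N)); lra. Qed.

Lemma rpsum_scal c F N : rpsum (fun p => c * F p) N = c * rpsum F N.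
Proof. induction N as [|N IH]; simpl; [lra|]. rewrite IH. destruct (prime.prime (S N)); lra. Qed.

Lemma rpsum_mono F M N :
  (forall p, prime.prime p = true -> 0 <= F p) -> (M <= N)%nat -> rpsum F M <= rpsum F N.
Proof.
  intros HF HMN. induction HMN as [|N _ IH]; simpl; [lra|].
  destruct (prime.prime (S N)) eqn:Hp; [pose proof (HF _ Hp)|]; lra.
Qed.

Lemma rpsum_vanishing F M N :
  (forall m, (M < m)%nat -> F m = 0) -> (M <= N)%nat -> rpsum F N = rpsum F M.
Proof.
  intros HF HMN. induction HMN as [|N HMN IH]; simpl; [reflexivity|].
  rewrite IH, HF by lia. destruct (prime.prime (S N)); ring.
Qed.

Lemma rpsum_le_of_vanishing F M N :
  (forall p, prime.prime p = true -> 0 <= F p) -> (forall m, (M < m)%nat -> F m = 0) ->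
  rpsum F N <= rpsum F M.
Proof.
  intros HF0 HFM. destruct (Nat.le_ge_cases N M) as [HNM | HMN].
  - now apply rpsum_mono.
  - rewrite (rpsum_vanishing F M N) by assumption. lra.
Qed.

Lemma abel_summation b f N :
  rpsum (fun p => b p * f p) N =
  rpsum b N * f N + sum_below (fun m => rpsum b m * (f m - f (S m))) N.
Proof. induction N as [|N IH]; simpl; [ring|]. rewrite IH. destruct (prime.prime (S N)); ring. Qed.

Lemma Re_cpsum f N : Re (cpsum f N) = rpsum (fun p => Re (f p)) N.
Proof.
  induction N as [|N IH]; [reflexivity|]. cbn [cpsum rpsum]. rewrite <- IH.
  destruct (prime.prime (S N)); destruct (cpsum f N), (f (S N)); simpl; ring.
Qed.

Lemma nfloor_INR m : Defs.nfloor (INR m) = m.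
Proof. unfold Defs.nfloor. rewrite Int_part_INR. apply Nat2Z.id. Qed.

Lemma nfloor_bounds y : 0 <= y -> INR (Defs.nfloor y) <= y /\ y - 1 < INR (Defs.nfloor y).
Proof.
  intros Hy. unfold Defs.nfloor. destruct (base_Int_part y) as [H1 H2].
  assert (0 <= Int_part y)%Z.
  { assert (Hm1 : IZR (-1) < IZR (Int_part y)) by lra. apply lt_IZR in Hm1. lia. }
  rewrite INR_IZR_INZ, Z2Nat.id by assumption. lra.
Qed.

Lemma INR_le_of_le_nfloor y p : (1 <= p)%nat -> (p <= Defs.nfloor y)%nat -> INR p <= y.
Proof.
  intros Hp HpN. destruct (Rle_lt_dec 0 y) as [Hy | Hy].
  - destruct (nfloor_bounds y Hy). apply le_INR in HpN. lra.
  - unfold Defs.nfloor in HpN. destruct (base_Int_part y).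
    assert (Int_part y < 0)%Z by (apply lt_IZR; simpl; lra).
    destruct (Int_part y); lia.
Qed.

Definition prime_density (b : nat -> R) (k : R) : Prop :=
  is_lim_seq (fun m => ln (INR m) / INR m * rpsum b m) k.

Lemma prime_density_ext b b' k :
  (forall p, prime.prime p = true -> b p = b' p) -> prime_density b k -> prime_density b' k.
Proof. intros Hb. apply is_lim_seq_ext. intros m. now rewrite (rpsum_ext b b'). Qed.

Lemma prime_density_plus b1 b2 k1 k2 :
  prime_density b1 k1 -> prime_density b2 k2 -> prime_density (fun p => b1 p + b2 p) (k1 + k2).
Proof.
  intros H1 H2. eapply is_lim_seq_ext; [|apply (is_lim_seq_plus' _ _ _ _ H1 H2)].
  intros m. cbv beta. rewrite rpsum_plus. ring.
Qed.

Lemma prime_density_scal c b k : prime_density b k -> prime_density (fun p => c * b p) (c * k).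
Proof.
  intros Hb. eapply is_lim_seq_ext; [|apply (is_lim_seq_scal_l _ c _ Hb)].
  intros m. cbv beta. rewrite rpsum_scal. ring.
Qed.

Lemma prime_density_sum_upto (F : nat -> nat -> R) (k : nat -> R) N :
  (forall g, (1 <= g <= N)%nat -> prime_density (F g) (k g)) ->
  prime_density (fun p => sum_upto (fun g => F g p) N) (sum_upto k N).
Proof.
  induction N as [|N IH]; intros HF.
  - eapply is_lim_seq_ext; [|apply (is_lim_seq_const 0)]. intros m.
    rewrite (rpsum_ext _ (fun _ => 0 * 0)) by (intros; unfold sum_upto; simpl; ring).
    rewrite rpsum_scal. unfold sum_upto. simpl. ring.
  - apply prime_density_plus; [apply IH; intros g Hg|]; apply HF; lia.
Qed.

Lemma prime_density_of_corr a b k :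
  prime_corr_limit a b k -> prime_density (fun p => Re (Cmult (a p) (Cconj (b p)))) (Re k).
Proof.
  intros Hab. apply is_lim_seq_spec. intros e.
  destruct (Hab e (cond_pos e)) as [X HX]. destruct (INR_unbounded X) as [N HN].
  exists N. intros m Hm. assert (HXm : X <= INR m) by (apply le_INR in Hm; lra).
  eapply Rle_lt_trans; [|apply (HX _ HXm)]. unfold cprimesum.
  rewrite nfloor_INR, <- Re_cpsum. eapply Rle_trans; [|apply re_le_Cmod].
  destruct (cpsum _ m), k. apply Req_le. simpl. f_equal. ring.
Qed.

(** * Abel summation against [m / ln m] *)

Lemma ln_pos x : 1 < x -> 0 < ln x.
Proof. intros Hx. rewrite <- ln_1. apply ln_increasing; lra. Qed.

Lemma ln_le_sub1 x : 0 < x -> ln x <= x - 1.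
Proof. intros Hx. pose proof (exp_ineq1_le (ln x)) as Hl. rewrite exp_ln in Hl; lra. Qed.

Definition neg_pow (s : R) (m : nat) : R := / Rpower (INR m) s.

(* Junk value [0] at [m = 1], where [ln 1 = 0] and [/ 0 = 0]. *)
Definition prime_count_approx (m : nat) : R := INR m / ln (INR m).

(* Abel summation of [sum_{p <= N} p^-s] with the prime counting function
   replaced by [m / ln m]. *)
Definition Psi (s : R) (N : nat) : R :=
  prime_count_approx N * neg_pow s N +
  sum_below (fun m => prime_count_approx m * (neg_pow s m - neg_pow s (S m))) N.

Lemma INR_ge2 m : (2 <= m)%nat -> 2 <= INR m.
Proof. intros Hm. apply (le_INR 2), Hm. Qed.

Lemma prime_count_approx_pos m : (2 <= m)%nat -> 0 < prime_count_approx m.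
Proof.
  intros Hm. pose proof (INR_ge2 m Hm).
  apply Rdiv_lt_0_compat; [lra | apply ln_pos; lra].
Qed.

Lemma prime_count_approx_nonneg m : 0 <= prime_count_approx m.
Proof.
  destruct m as [|[|m]]; unfold prime_count_approx.
  - simpl. unfold Rdiv. rewrite Rmult_0_l. lra.
  - simpl. rewrite ln_1, Rdiv_0_r. lra.
  - apply Rlt_le, prime_count_approx_pos. lia.
Qed.

Lemma neg_pow_pos s m : 0 < neg_pow s m.
Proof. apply Rinv_0_lt_compat, exp_pos. Qed.

Lemma neg_pow_decr s m : 0 <= s -> (1 <= m)%nat -> 0 <= neg_pow s m - neg_pow s (S m).
Proof.
  intros Hs Hm. unfold neg_pow. apply (le_INR 1) in Hm. simpl in Hm.
  assert (Rpower (INR m) s <= Rpower (INR (S m)) s)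
    by (apply Rle_Rpower_l; [lra | rewrite S_INR; lra]).
  assert (/ Rpower (INR (S m)) s <= / Rpower (INR m) s)
    by (apply Rinv_le_contravar; [apply exp_pos | lra]).
  lra.
Qed.

Lemma Psi_weight_nonneg s m :
  0 <= s -> 0 <= prime_count_approx m * (neg_pow s m - neg_pow s (S m)).
Proof.
  intros Hs. destruct m as [|m].
  - unfold prime_count_approx. simpl. unfold Rdiv. rewrite !Rmult_0_l. lra.
  - apply Rmult_le_pos; [apply prime_count_approx_nonneg | apply neg_pow_decr; [lra | lia]].
Qed.

Lemma Psi_ge_head s N : 0 <= s -> prime_count_approx N * neg_pow s N <= Psi s N.
Proof.
  intros Hs. unfold Psi.
  pose proof (sum_below_nonneg _ N (fun m => Psi_weight_nonneg s m Hs)). lra.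
Qed.

Lemma Psi_nonneg s N : 0 <= s -> 0 <= Psi s N.
Proof.
  intros Hs. eapply Rle_trans; [|apply Psi_ge_head, Hs].
  apply Rmult_le_pos; [apply prime_count_approx_nonneg | apply Rlt_le, neg_pow_pos].
Qed.

Lemma prime_density_partial_sums b k e : prime_density b k -> 0 < e ->
  eventually (fun m => Rabs (rpsum b m - k * prime_count_approx m) <= e * prime_count_approx m).
Proof.
  intros Hb He. apply is_lim_seq_spec in Hb. destruct (Hb (mkposreal e He)) as [N HN].
  exists (max N 2). intros m Hm. specialize (HN m ltac:(lia)). simpl in HN.
  pose proof (INR_ge2 m ltac:(lia)). assert (Hl : 0 < ln (INR m)) by (apply ln_pos; lra).
  replace (rpsum b m - k * prime_count_approx m)
    with (prime_count_approx m * (ln (INR m) / INR m * rpsum b m - k))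
    by (unfold prime_count_approx; field; lra).
  rewrite Rabs_mult, Rabs_pos_eq by (apply prime_count_approx_nonneg).
  rewrite Rmult_comm. apply Rmult_le_compat_r; [apply prime_count_approx_nonneg | lra].
Qed.

Lemma Psi_error_identity b k s N :
  rpsum (fun p => b p * neg_pow s p) N - k * Psi s N =
  (rpsum b N - k * prime_count_approx N) * neg_pow s N +
  sum_below (fun m => (rpsum b m - k * prime_count_approx m) *
                      (neg_pow s m - neg_pow s (S m))) N.
Proof.
  rewrite abel_summation. unfold Psi.
  rewrite (sum_below_ext (fun m => (rpsum b m - k * prime_count_approx m) * _)
    (fun m => rpsum b m * (neg_pow s m - neg_pow s (S m)) +
      (- k) * (prime_count_approx m * (neg_pow s m - neg_pow s (S m))))) by (intros; ring).
  rewrite sum_below_plus, sum_below_scal. ring.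
Qed.

Lemma weighted_prime_sum_asymptotic b k s e : prime_density b k -> 0 <= s -> 0 < e ->
  exists c, eventually (fun N =>
    Rabs (rpsum (fun p => b p * neg_pow s p) N - k * Psi s N) <= e * Psi s N + c).
Proof.
  intros Hb Hs He.
  destruct (prime_density_partial_sums b k e Hb He) as [N0 HN0].
  destruct (sum_below_abs_le_eventually
    (fun m => (rpsum b m - k * prime_count_approx m) * (neg_pow s m - neg_pow s (S m)))
    (fun m => e * (prime_count_approx m * (neg_pow s m - neg_pow s (S m))))) as [c Hc].
  { intros m. apply Rmult_le_pos; [lra | apply Psi_weight_nonneg, Hs]. }
  { exists (max N0 1). intros m Hm.
    rewrite Rabs_mult, (Rabs_pos_eq (neg_pow s m - _)) by (apply neg_pow_decr; [lra | lia]).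
    rewrite <- Rmult_assoc. apply Rmult_le_compat_r; [apply neg_pow_decr; [lra | lia] |].
    apply HN0. lia. }
  exists c, N0. intros N HN. rewrite Psi_error_identity.
  eapply Rle_trans; [apply Rabs_triang|]. specialize (Hc N).
  rewrite sum_below_scal in Hc. unfold Psi.
  assert (Rabs ((rpsum b N - k * prime_count_approx N) * neg_pow s N)
          <= e * (prime_count_approx N * neg_pow s N)).
  { rewrite Rabs_mult, (Rabs_pos_eq (neg_pow s N)) by apply Rlt_le, neg_pow_pos.
    rewrite <- Rmult_assoc. apply Rmult_le_compat_r; [apply Rlt_le, neg_pow_pos | apply HN0, HN]. }
  lra.
Qed.

(** * Growth of [Psi] *)

Lemma eventually_ge_of_tends f M :
  is_lim f p_infty p_infty -> Rbar_locally p_infty (fun T => M <= f T).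
Proof. intros Hf. apply Hf. exists M. intros y Hy. lra. Qed.

Lemma is_lim_lnln : is_lim (fun T => ln (ln T)) p_infty p_infty.
Proof. exact (filterlim_comp _ _ _ ln ln _ _ _ is_lim_ln_p is_lim_ln_p). Qed.

Lemma is_lim_lnlnln : is_lim (fun T => ln (ln (ln T))) p_infty p_infty.
Proof. exact (filterlim_comp _ _ _ _ ln _ _ _ is_lim_lnln is_lim_ln_p). Qed.

Lemma nfloor_beta_ln_tends beta :
  0 < beta -> filterlim (fun T => Defs.nfloor (beta * ln T)) (Rbar_locally p_infty) eventually.
Proof.
  intros Hb P [N0 HP]. unfold filtermap. generalize (eventually_ge_of_tends _ ((INR N0 + 1) / beta) is_lim_ln_p).
  apply filter_imp. intros T HT. apply HP.
  assert (Hy : INR N0 + 1 <= beta * ln T).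
  { apply (Rmult_le_compat_l beta) in HT; [|lra]. field_simplify in HT; lra. }
  pose proof (pos_INR N0). destruct (nfloor_bounds (beta * ln T)) as [_ Hn]; [lra|].
  apply Nat.lt_le_incl, INR_lt. lra.
Qed.

Lemma exp_ge_sq z : 0 <= z -> z * z / 4 <= exp z.
Proof.
  intros Hz. replace (exp z) with (exp (z / 2) * exp (z / 2)) by (rewrite <- exp_plus; f_equal; field).
  pose proof (exp_ineq1_le (z / 2)). nra.
Qed.

Definition growth_rate (s T : R) : R :=
  if Rlt_dec s 1 then Rpower (ln T) (1 - s) / ln (ln T) else ln (ln (ln T)).

Lemma growth_rate_tends s K :
  0 < s <= 1 -> Rbar_locally p_infty (fun T => K <= growth_rate s T).
Proof.
  intros Hs. unfold growth_rate. destruct (Rlt_dec s 1) as [Hlt | Hge].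
  2: apply eventually_ge_of_tends, is_lim_lnlnln.
  set (a := 1 - s). assert (Ha : 0 < a) by (unfold a; lra).
  generalize (eventually_ge_of_tends _ (Rmax 1 (4 * Rabs K / (a * a))) is_lim_lnln).
  apply filter_imp. intros T HT. set (u := ln (ln T)) in *.
  pose proof (Rmax_l 1 (4 * Rabs K / (a * a))). pose proof (Rmax_r 1 (4 * Rabs K / (a * a))).
  change (Rpower (ln T) a) with (exp (a * u)).
  pose proof (exp_ge_sq (a * u) ltac:(nra)).
  assert (Hq : a * a * u / 4 <= exp (a * u) / u).
  { apply (Rmult_le_reg_r u); [lra|].
    replace (exp (a * u) / u * u) with (exp (a * u)) by (field; lra). nra. }
  assert (4 * Rabs K <= u * (a * a)).
  { replace (4 * Rabs K) with (4 * Rabs K / (a * a) * (a * a)) by (field; lra).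
    apply Rmult_le_compat_r; nra. }
  pose proof (Rle_abs K). nra.
Qed.

Lemma nfloor_ge_half y : 4 <= y ->
  y / 2 <= INR (Defs.nfloor y) <= y /\ (2 <= Defs.nfloor y)%nat.
Proof.
  intros Hy. destruct (nfloor_bounds y) as [H1 H2]; [lra|].
  split; [lra|]. apply INR_le. simpl. lra.
Qed.

Lemma Psi_ge_rate_lt1 s beta : 0 < s < 1 -> 0 < beta ->
  exists c, 0 < c /\ Rbar_locally p_infty (fun T =>
    c * (Rpower (ln T) (1 - s) / ln (ln T)) <= Psi s (Defs.nfloor (beta * ln T))).
Proof.
  intros Hs Hb. set (a := 1 - s).
  exists (Rpower (beta / 2) a / 2). split; [apply Rdiv_lt_0_compat; [apply exp_pos | lra]|].
  generalize (filter_and _ _ (eventually_ge_of_tends _ (Rmax (4 / beta) beta) is_lim_ln_p)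
                             (eventually_ge_of_tends _ 1 is_lim_lnln)).
  apply filter_imp. intros T [HlT Hu]. set (u := ln (ln T)) in *.
  pose proof (Rmax_l (4 / beta) beta). pose proof (Rmax_r (4 / beta) beta).
  set (y := beta * ln T).
  assert (Hy : 4 <= y).
  { unfold y. replace 4 with (beta * (4 / beta)) by (field; lra). apply Rmult_le_compat_l; lra. }
  destruct (nfloor_ge_half y Hy) as [[HN1 HN2] HN]. set (N := Defs.nfloor y) in *.
  eapply Rle_trans; [|apply Psi_ge_head; lra].
  assert (HlN : 0 < ln (INR N)) by (apply ln_pos; lra).
  replace (prime_count_approx N * neg_pow s N) with (Rpower (INR N) a / ln (INR N)).
  2: { assert (E : Rpower (INR N) a * Rpower (INR N) s = INR N).
       { rewrite <- Rpower_plus. unfold a. replace (1 - s + s) with 1 by ring.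
         apply Rpower_1. lra. }
       unfold prime_count_approx, neg_pow.
       replace (INR N / ln (INR N)) with (Rpower (INR N) a * Rpower (INR N) s / ln (INR N))
         by (rewrite E; reflexivity).
       field. split; [apply Rgt_not_eq, exp_pos | lra]. }
  assert (HNa : Rpower (beta / 2) a * Rpower (ln T) a <= Rpower (INR N) a).
  { rewrite Rpower_mult_distr by lra. apply Rle_Rpower_l; [unfold a; lra|].
    split; [apply Rmult_lt_0_compat; lra | unfold y in HN1; lra]. }
  assert (HlnN : ln (INR N) <= 2 * u).
  { assert (HNy : ln (INR N) <= ln y) by (apply ln_le; lra).
    unfold y in HNy. rewrite ln_mult in HNy by lra. fold u in HNy.
    assert (ln beta <= u) by (apply ln_le; lra). lra. }
  apply (Rle_trans _ (Rpower (INR N) a / (2 * u))).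
  - replace (Rpower (beta / 2) a / 2 * (Rpower (ln T) a / u))
      with (Rpower (beta / 2) a * Rpower (ln T) a / (2 * u)) by (field; lra).
    apply Rmult_le_compat_r; [apply Rlt_le, Rinv_0_lt_compat; lra | exact HNa].
  - apply Rmult_le_compat_l; [apply Rlt_le, exp_pos|]. apply Rinv_le_contravar; lra.
Qed.

Lemma lnln_increment_le m : (2 <= m)%nat ->
  ln (ln (INR m + 2)) - ln (ln (INR m + 1)) <=
  prime_count_approx m * (neg_pow 1 m - neg_pow 1 (S m)).
Proof.
  intros Hm. pose proof (INR_ge2 m Hm).
  assert (0 < ln (INR m)) by (apply ln_pos; lra).
  assert (0 < ln (INR m + 1)) by (apply ln_pos; lra).
  assert (0 < ln (INR m + 2)) by (apply ln_pos; lra).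
  replace (prime_count_approx m * (neg_pow 1 m - neg_pow 1 (S m)))
    with (/ ((INR m + 1) * ln (INR m))).
  2: { unfold prime_count_approx, neg_pow. rewrite S_INR, !Rpower_1 by lra.
       field. repeat split; lra. }
  assert (Hd : ln (INR m + 2) - ln (INR m + 1) <= / (INR m + 1)).
  { rewrite <- ln_div by lra. eapply Rle_trans; [apply ln_le_sub1, Rdiv_lt_0_compat; lra|].
    apply Req_le. field. lra. }
  assert (ln (INR m) <= ln (INR m + 1)) by (apply ln_le; lra).
  rewrite <- ln_div by lra. eapply Rle_trans; [apply ln_le_sub1, Rdiv_lt_0_compat; lra|].
  replace (ln (INR m + 2) / ln (INR m + 1) - 1)
    with ((ln (INR m + 2) - ln (INR m + 1)) / ln (INR m + 1)) by (field; lra).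
  apply (Rle_trans _ (/ (INR m + 1) / ln (INR m + 1))).
  - apply Rmult_le_compat_r; [apply Rlt_le, Rinv_0_lt_compat|]; lra.
  - unfold Rdiv. rewrite Rinv_mult. apply Rmult_le_compat_l; [apply Rlt_le, Rinv_0_lt_compat; lra|].
    apply Rinv_le_contravar; lra.
Qed.

Lemma Psi_ge_sum s N : 0 <= s ->
  sum_below (fun m => prime_count_approx m * (neg_pow s m - neg_pow s (S m))) N <= Psi s N.
Proof.
  intros Hs. unfold Psi.
  pose proof (prime_count_approx_nonneg N). pose proof (neg_pow_pos s N). nra.
Qed.

Lemma lnln_le_Psi1 N : (2 <= N)%nat -> ln (ln (INR N + 1)) - ln (ln 3) <= Psi 1 N.
Proof.
  intros HN. eapply Rle_trans; [|apply Psi_ge_sum; lra].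
  induction HN as [|N HN IH].
  - replace (INR 2 + 1) with 3 by (simpl; lra). rewrite Rminus_diag.
    apply sum_below_nonneg. intros m. apply Psi_weight_nonneg. lra.
  - cbn [sum_below]. pose proof (lnln_increment_le N HN). rewrite S_INR.
    replace (INR N + 1 + 1) with (INR N + 2) by ring. lra.
Qed.

Lemma Psi_ge_rate_1 beta : 0 < beta ->
  Rbar_locally p_infty (fun T => / 2 * ln (ln (ln T)) <= Psi 1 (Defs.nfloor (beta * ln T))).
Proof.
  intros Hb.
  generalize (filter_and _ _ (eventually_ge_of_tends _ (4 / beta) is_lim_ln_p)
    (filter_and _ _ (eventually_ge_of_tends _ (Rmax 1 (- 2 * ln beta)) is_lim_lnln)
                    (eventually_ge_of_tends _ 4 is_lim_lnlnln))).
  apply filter_imp. intros T [HlT [Hu Hv]]. set (u := ln (ln T)) in *.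
  pose proof (Rmax_l 1 (- 2 * ln beta)). pose proof (Rmax_r 1 (- 2 * ln beta)).
  set (y := beta * ln T).
  assert (Hy : 4 <= y).
  { unfold y. replace 4 with (beta * (4 / beta)) by (field; lra). apply Rmult_le_compat_l; lra. }
  destruct (nfloor_ge_half y Hy) as [_ HN]. destruct (nfloor_bounds y) as [_ HN1]; [lra|].
  set (N := Defs.nfloor y) in *.
  assert (0 < 4 / beta) by (apply Rdiv_lt_0_compat; lra).
  eapply Rle_trans; [|apply lnln_le_Psi1, HN].
  assert (Hly : u / 2 <= ln y) by (unfold y; rewrite ln_mult by lra; fold u; lra).
  assert (Hlu : ln (u / 2) <= ln (ln (INR N + 1))).
  { apply ln_le; [lra|]. eapply Rle_trans; [exact Hly|]. apply ln_le; lra. }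
  rewrite ln_div in Hlu by lra.
  assert (ln 2 <= 1) by (pose proof (ln_le_sub1 2); lra).
  assert (ln (ln 3) <= 1).
  { assert (H3 : 0 < ln 3) by (apply ln_pos; lra).
    pose proof (ln_le_sub1 (ln 3) H3). pose proof (ln_le_sub1 3). lra. }
  lra.
Qed.

Lemma Psi_ge_growth_rate s beta : 0 < s <= 1 -> 0 < beta ->
  exists c, 0 < c /\
    Rbar_locally p_infty (fun T => c * growth_rate s T <= Psi s (Defs.nfloor (beta * ln T))).
Proof.
  intros Hs Hb. unfold growth_rate. destruct (Rlt_dec s 1) as [Hlt | Hge].
  - apply Psi_ge_rate_lt1; [lra | exact Hb].
  - exists (/ 2). split; [lra|]. replace s with 1 by lra. now apply Psi_ge_rate_1.
Qed.

(** * The sum over primes *)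

Definition sg (H g : nat) : R := if Nat.leb g H then 1 else -1.

Lemma Re_conj_signed_sum H (u : nat -> C) N z :
  Re (Cmult (Cconj (csum1 (fun g => if Nat.leb g H then u g else Copp (u g)) N)) z) =
  sum_upto (fun g => sg H g * Re (Cmult (Cconj (u g)) z)) N.
Proof.
  induction N as [|N IH]; [unfold sum_upto; destruct z; simpl; ring|].
  unfold sum_upto in *. cbn [csum1 sum_below]. rewrite <- IH. unfold sg.
  destruct (Nat.leb (S N) H); destruct (csum1 _ N), (u (S N)), z; simpl; ring.
Qed.

Lemma Cmod_signed_sum_le H (u : nat -> C) N D :
  (forall g, (1 <= g <= N)%nat -> Cmod (u g) <= D) ->
  Cmod (csum1 (fun g => if Nat.leb g H then u g else Copp (u g)) N) <= INR N * D.
Proof.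
  induction N as [|N IH]; intros Hu; cbn [csum1]; [rewrite Cmod_0, Rmult_0_l; lra|].
  eapply Rle_trans; [apply Cmod_triangle|]. rewrite S_INR.
  pose proof (IH (fun g Hg => Hu g ltac:(lia))). pose proof (Hu (S N) ltac:(lia)).
  destruct (Nat.leb (S N) H); rewrite ?Cmod_opp; lra.
Qed.

Lemma Rabs_Re_conj_mult_le u z : Rabs (Re (Cmult (Cconj u) z)) <= (Cmod u ^ 2 + Cmod z ^ 2) / 2.
Proof.
  eapply Rle_trans; [apply re_le_Cmod|]. rewrite Cmod_mult, Cmod_conj.
  pose proof (pow2_ge_0 (Cmod u - Cmod z)). nra.
Qed.

Lemma Cmod_sq_Re u : Cmod u ^ 2 = Re (Cmult u (Cconj u)).
Proof. rewrite <- Cmod2_conj. reflexivity. Qed.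

(* [sg H h * Re(conj(C r(p)) a_h(p))] for [xe <= p <= beta ln T]. *)
Definition corr_sum H G (a : nat -> nat -> C) h p : R :=
  sum_upto (fun g => sg H h * sg H g * Re (Cmult (Cconj (a g p)) (a h p))) (H + G).

Definition corr_majorant H G (a : nat -> nat -> C) h p : R :=
  sum_upto (fun g => (Cmod (a g p) ^ 2 + Cmod (a h p) ^ 2) / 2) (H + G).

Definition corr_majorant_density H G (kappa : nat -> nat -> C) h : R :=
  sum_upto (fun g => (Re (kappa g g) + Re (kappa h h)) / 2) (H + G).

Lemma Rabs_corr_sum_le H G a h p : Rabs (corr_sum H G a h p) <= corr_majorant H G a h p.
Proof.
  unfold corr_sum, corr_majorant. eapply Rle_trans; [apply sum_below_abs|].
  apply sum_below_le. intros m _. rewrite Rabs_mult.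
  replace (Rabs (sg H h * sg H (S m))) with 1
    by (unfold sg; destruct (Nat.leb h H), (Nat.leb (S m) H);
        unfold Rabs; destruct (Rcase_abs _); lra).
  rewrite Rmult_1_l. apply Rabs_Re_conj_mult_le.
Qed.

Section Correlations.

Variables (H G : nat) (a kappa : nat -> nat -> C).
Hypothesis corr : forall h g, (1 <= h <= H + G)%nat -> (1 <= g <= H + G)%nat ->
  prime_corr_limit (a h) (a g) (kappa h g).

Lemma corr_sum_density h :
  (forall g, (1 <= g <= H + G)%nat -> g <> h -> kappa h g = RtoC 0) ->
  (1 <= h <= H + G)%nat -> prime_density (corr_sum H G a h) (Re (kappa h h)).
Proof.
  intros Hoff Hh.
  replace (Re (kappa h h)) with (sum_upto (fun g => sg H h * sg H g * Re (kappa h g)) (H + G)).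
  - apply prime_density_sum_upto. intros g Hg. apply prime_density_scal.
    eapply prime_density_ext; [|apply prime_density_of_corr, corr; assumption].
    intros p _. cbv beta. destruct (a g p), (a h p). simpl. ring.
  - rewrite (sum_upto_single _ _ h Hh).
    + unfold sg. destruct (Nat.leb h H); ring.
    + intros g Hg Hne. rewrite Hoff by assumption. simpl. ring.
Qed.

Lemma corr_majorant_density_spec h :
  (1 <= h <= H + G)%nat -> prime_density (corr_majorant H G a h) (corr_majorant_density H G kappa h).
Proof.
  intros Hh. apply prime_density_sum_upto. intros g Hg.
  replace ((Re (kappa g g) + Re (kappa h h)) / 2)
    with (/ 2 * (Re (kappa g g) + Re (kappa h h))) by field.
  eapply prime_density_ext;
    [|apply prime_density_scal, prime_density_plus; apply prime_density_of_corr, corr; assumption].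
  intros p _. cbv beta. rewrite !Cmod_sq_Re. field.
Qed.

End Correlations.

Definition Sterm H G a Cc xe beta T h s (p : nat) : R :=
  let r := rcoef H G a Cc xe beta T p in
  Re (Cmult (Cconj r) (a h p)) / ((1 + (Cmod r) ^ 2) * Rpower (INR p) s).

Lemma Sterm_below_xe H G a Cc xe beta T h s p : ~ xe <= INR p -> Sterm H G a Cc xe beta T h s p = 0.
Proof.
  intros Hp. unfold Sterm, rcoef. destruct (Rle_dec xe (INR p)); [contradiction|].
  destruct (a h p). simpl. unfold Rdiv. ring.
Qed.

Lemma neg_div_one_plus_le Q m d b : 0 <= m <= d -> Rabs Q <= b -> - Q / (1 + m) <= - Q + d * b.
Proof.
  intros Hm HQ. replace (- Q / (1 + m)) with (- Q + Q * (m / (1 + m))) by (field; lra).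
  assert (0 <= m / (1 + m) <= d).
  { split; [apply Rdiv_le_0_compat; lra|].
    apply (Rmult_le_reg_r (1 + m)); [lra|]. field_simplify; nra. }
  pose proof (Rle_abs Q). pose proof (Rle_abs (- Q)). rewrite Rabs_Ropp in *. nra.
Qed.

(* The factor [1 / (1 + |r(p)|^2)] costs at most [|r(p)|^2 <= ((H + G) D / C)^2]. *)
Lemma jsign_Sterm_le H G a h Cc xe beta T s D p : 0 < Cc ->
  (forall g, (1 <= g <= H + G)%nat -> Cmod (a g p) <= D) ->
  xe <= INR p -> INR p <= beta * ln T ->
  jsign H h * Sterm H G a Cc xe beta T h s p <=
  / Cc * (- corr_sum H G a h p + (INR (H + G) * D / Cc) ^ 2 * corr_majorant H G a h p)
  * neg_pow s p.
Proof.
  intros HC HD Hx HT. unfold Sterm, rcoef.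
  destruct (Rle_dec xe (INR p)) as [_|]; [|contradiction].
  destruct (Rle_dec (INR p) (beta * ln T)) as [_|]; [|contradiction].
  set (R := csum1 (fun g => if Nat.leb g H then a g p else Copp (a g p)) (H + G)).
  assert (HR : Cmod R <= INR (H + G) * D) by (apply Cmod_signed_sum_le, HD).
  assert (Hm : 0 <= Cmod (Cmult (RtoC (/ Cc)) R) ^ 2 <= (INR (H + G) * D / Cc) ^ 2).
  { split; [apply pow2_ge_0|]. apply pow_incr. split; [apply Cmod_ge_0|].
    rewrite Cmod_mult, Cmod_R, Rabs_pos_eq by (apply Rlt_le, Rinv_0_lt_compat, HC).
    replace (INR (H + G) * D / Cc) with (/ Cc * (INR (H + G) * D)) by (field; lra).
    apply Rmult_le_compat_l; [apply Rlt_le, Rinv_0_lt_compat, HC | exact HR]. }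
  assert (Hre : jsign H h * Re (Cmult (Cconj (Cmult (RtoC (/ Cc)) R)) (a h p)) =
                / Cc * - corr_sum H G a h p).
  { replace (Re (Cmult (Cconj (Cmult (RtoC (/ Cc)) R)) (a h p)))
      with (/ Cc * Re (Cmult (Cconj R) (a h p))) by (destruct R, (a h p); simpl; ring).
    unfold R. rewrite (Re_conj_signed_sum H (fun g => a g p)).
    unfold corr_sum, sum_upto.
    rewrite (sum_below_ext (fun m => sg H h * sg H (S m) * _)
      (fun m => sg H h * (sg H (S m) * Re (Cmult (Cconj (a (S m) p)) (a h p)))))
      by (intros; ring).
    rewrite sum_below_scal. unfold jsign, sg. destruct (Nat.leb h H); ring. }
  unfold Rdiv. rewrite <- Rmult_assoc, Hre, Rinv_mult.
  unfold neg_pow. rewrite <- Rmult_assoc, (Rmult_assoc (/ Cc)).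
  apply Rmult_le_compat_r; [apply Rlt_le, Rinv_0_lt_compat, exp_pos|].
  apply Rmult_le_compat_l; [apply Rlt_le, Rinv_0_lt_compat, HC|].
  apply neg_div_one_plus_le; [exact Hm | apply Rabs_corr_sum_le].
Qed.

(* Below [xe] the terms of [Ssum] vanish while the bound [phi] need not;
   the defect [psi] lives on the finitely many primes below [xe]. *)
Lemma jsign_Ssum_le_main_term H G a h Cc xe beta s D : 0 < Cc ->
  (forall g, (1 <= g <= H + G)%nat -> forall p, prime.prime p = true -> Cmod (a g p) <= D) ->
  exists K, forall T, let N := Defs.nfloor (beta * ln T) in
    jsign H h * Ssum H G a Cc xe beta T h s <=
    / Cc * (- rpsum (fun p => corr_sum H G a h p * neg_pow s p) N
            + (INR (H + G) * D / Cc) ^ 2 * rpsum (fun p => corr_majorant H G a h p * neg_pow s p) N)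
    + K.
Proof.
  intros HC HD. set (d := (INR (H + G) * D / Cc) ^ 2).
  set (phi := fun p => / Cc * (- corr_sum H G a h p + d * corr_majorant H G a h p) * neg_pow s p).
  set (psi := fun p => if Rle_dec xe (INR p) then 0 else Rabs (phi p)).
  destruct (INR_unbounded xe) as [Mx HMx].
  exists (rpsum psi Mx). intros T N.
  replace (/ Cc * _) with (rpsum phi N).
  2: { transitivity (rpsum (fun p => / Cc * (-1 * (corr_sum H G a h p * neg_pow s p)
                                + d * (corr_majorant H G a h p * neg_pow s p))) N).
       - apply rpsum_ext. intros p _. unfold phi. ring.
       - rewrite rpsum_scal, rpsum_plus, !rpsum_scal. ring. }
  assert (Hpsi : rpsum psi N <= rpsum psi Mx).
  { apply rpsum_le_of_vanishing.
    - intros p _. unfold psi. destruct (Rle_dec xe (INR p)); [lra | apply Rabs_pos].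
    - intros m Hm. unfold psi. destruct (Rle_dec xe (INR m)) as [|Hx]; [reflexivity|].
      exfalso. apply Hx. apply lt_INR in Hm. lra. }
  enough (jsign H h * Ssum H G a Cc xe beta T h s <= rpsum phi N + rpsum psi N) by lra.
  change (Ssum H G a Cc xe beta T h s) with (rpsum (Sterm H G a Cc xe beta T h s) N).
  rewrite <- rpsum_scal, <- rpsum_plus. apply rpsum_le. intros p Hp HpN.
  unfold psi. destruct (Rle_dec xe (INR p)) as [Hx | Hx].
  - rewrite Rplus_0_r. apply jsign_Sterm_le; [exact HC | intros g Hg; apply HD; assumption
    | exact Hx | apply INR_le_of_le_nfloor; [pose proof (prime_ge2 p Hp); lia | exact HpN]].
  - rewrite Sterm_below_xe by exact Hx. pose proof (Rle_abs (- phi p)).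
    rewrite Rabs_Ropp in *. lra.
Qed.

Lemma jsign_Ssum_le_Psi H G a kappa h Cc xe beta s D :
  (forall h g, (1 <= h <= H + G)%nat -> (1 <= g <= H + G)%nat ->
     prime_corr_limit (a h) (a g) (kappa h g)) ->
  (forall g, (1 <= g <= H + G)%nat -> g <> h -> kappa h g = RtoC 0) ->
  (1 <= h <= H + G)%nat -> 0 < Re (kappa h h) -> 0 < s -> 0 < beta -> 0 < Cc ->
  (forall g, (1 <= g <= H + G)%nat -> forall p, prime.prime p = true -> Cmod (a g p) <= D) ->
  (INR (H + G) * D / Cc) ^ 2 * (Rabs (corr_majorant_density H G kappa h) + 1)
    <= Re (kappa h h) / 4 ->
  exists K, Rbar_locally p_infty (fun T =>
    jsign H h * Ssum H G a Cc xe beta T h s <=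
    - (Re (kappa h h) / 2) / Cc * Psi s (Defs.nfloor (beta * ln T)) + K).
Proof.
  intros Hcorr Hoff Hh Hk Hs Hb HC HD Hsmall.
  destruct (jsign_Ssum_le_main_term H G a h Cc xe beta s D HC HD) as [K0 HK0].
  destruct (weighted_prime_sum_asymptotic _ _ s (Re (kappa h h) / 4)
              (corr_sum_density H G a kappa Hcorr h Hoff Hh)) as [c1 Hc1]; [lra | lra |].
  destruct (weighted_prime_sum_asymptotic _ _ s 1
              (corr_majorant_density_spec H G a kappa Hcorr h Hh)) as [c2 Hc2]; [lra | lra |].
  set (k := Re (kappa h h)) in *. set (kb := corr_majorant_density H G kappa h) in *.
  set (d := (INR (H + G) * D / Cc) ^ 2) in *.
  exists (/ Cc * (c1 + d * c2) + K0).
  generalize (nfloor_beta_ln_tends beta Hb _ (filter_and _ _ Hc1 Hc2)).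
  unfold filtermap. apply filter_imp. intros T [HQ Hmaj]. specialize (HK0 T).
  cbv zeta in HK0. set (N := Defs.nfloor (beta * ln T)) in *.
  set (SQ := rpsum (fun p => corr_sum H G a h p * neg_pow s p) N) in *.
  set (Sb := rpsum (fun p => corr_majorant H G a h p * neg_pow s p) N) in *.
  pose proof (Psi_nonneg s N ltac:(lra)) as HPsi.
  assert (HSQ : 3 / 4 * k * Psi s N - c1 <= SQ).
  { pose proof (Rle_abs (- (SQ - k * Psi s N))). rewrite Rabs_Ropp in *. lra. }
  assert (HSb : d * Sb <= k / 4 * Psi s N + d * c2).
  { pose proof (Rle_abs (Sb - kb * Psi s N)). pose proof (Rle_abs kb).
    assert (Hd : 0 <= d) by apply pow2_ge_0.
    assert (d * Sb <= d * ((Rabs kb + 1) * Psi s N + c2)) by (apply Rmult_le_compat_l; nra).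
    assert (d * ((Rabs kb + 1) * Psi s N) <= k / 4 * Psi s N)
      by (rewrite <- Rmult_assoc; apply Rmult_le_compat_r; assumption).
    lra. }
  assert (Hmain : - SQ + d * Sb <= - (k / 2) * Psi s N + (c1 + d * c2)) by lra.
  apply (Rmult_le_compat_l (/ Cc)) in Hmain; [|apply Rlt_le, Rinv_0_lt_compat, HC].
  replace (/ Cc * (- (k / 2) * Psi s N + (c1 + d * c2)))
    with (- (k / 2) / Cc * Psi s N + / Cc * (c1 + d * c2)) in Hmain by (field; lra).
  lra.
Qed.

Lemma jsign_Ssum_le_rate H G a kappa h Cc xe beta s D c :
  (forall h g, (1 <= h <= H + G)%nat -> (1 <= g <= H + G)%nat ->
     prime_corr_limit (a h) (a g) (kappa h g)) ->
  (forall g, (1 <= g <= H + G)%nat -> g <> h -> kappa h g = RtoC 0) ->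
  (1 <= h <= H + G)%nat -> 0 < Re (kappa h h) -> 0 < s <= 1 -> 0 < beta -> 0 < Cc ->
  (forall g, (1 <= g <= H + G)%nat -> forall p, prime.prime p = true -> Cmod (a g p) <= D) ->
  (INR (H + G) * D / Cc) ^ 2 * (Rabs (corr_majorant_density H G kappa h) + 1)
    <= Re (kappa h h) / 4 ->
  0 < c ->
  Rbar_locally p_infty (fun T => c * growth_rate s T <= Psi s (Defs.nfloor (beta * ln T))) ->
  Rbar_locally p_infty (fun T =>
    jsign H h * Ssum H G a Cc xe beta T h s <=
    - (Re (kappa h h) * c / (4 * Cc)) * growth_rate s T).
Proof.
  intros Hcorr Hoff Hh Hk Hs Hb HC HD Hsmall Hc HPsi.
  destruct (jsign_Ssum_le_Psi H G a kappa h Cc xe beta s D) as [K HK]; try assumption; [lra|].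
  set (k := Re (kappa h h)) in *.
  assert (Hkc : 0 < k * c / (4 * Cc)) by (apply Rdiv_lt_0_compat; nra).
  generalize (filter_and _ _ HK (filter_and _ _ HPsi (growth_rate_tends s (K / (k * c / (4 * Cc))) Hs))).
  apply filter_imp. intros T [HS [HP Hg]].
  apply (Rmult_le_compat_l (k * c / (4 * Cc))) in Hg; [|lra].
  replace (k * c / (4 * Cc) * (K / (k * c / (4 * Cc)))) with K in Hg by (field; lra).
  apply (Rmult_le_compat_l (k / 2 / Cc)) in HP; [|apply Rdiv_le_0_compat; lra].
  replace (k / 2 / Cc * (c * growth_rate s T)) with (2 * (k * c / (4 * Cc) * growth_rate s T))
    in HP by (field; lra).
  lra.
Qed.

Lemma filter_forall_upto {T : Type} {F : (T -> Prop) -> Prop} {FF : Filter F}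
  (P : nat -> T -> Prop) N :
  (forall h, (1 <= h <= N)%nat -> F (P h)) -> F (fun x => forall h, (1 <= h <= N)%nat -> P h x).
Proof.
  induction N as [|N IH]; intros HP.
  - apply filter_forall. intros x h Hh. lia.
  - generalize (@filter_and _ F FF _ _ (IH (fun h Hh => HP h ltac:(lia))) (HP (S N) ltac:(lia))).
    apply filter_imp. intros x [Hx HSx] h Hh.
    destruct (Nat.eq_dec h (S N)) as [->|]; [exact HSx | apply Hx; lia].
Qed.

Lemma bound_upto (P : nat -> R -> Prop) N :
  (forall g, (1 <= g <= N)%nat -> exists D, forall D', D <= D' -> P g D') ->
  exists D, forall D', D <= D' -> forall g, (1 <= g <= N)%nat -> P g D'.
Proof.
  induction N as [|N IH]; intros HP; [exists 0; intros; lia|].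
  destruct IH as [D1 HD1]; [intros g Hg; apply HP; lia|].
  destruct (HP (S N) ltac:(lia)) as [D2 HD2].
  exists (Rmax D1 D2). intros D' HD' g Hg. pose proof (Rmax_l D1 D2). pose proof (Rmax_r D1 D2).
  destruct (Nat.eq_dec g (S N)) as [->|]; [apply HD2; lra | apply HD1; [lra | lia]].
Qed.

Lemma small_for_large_C k A Y : 0 < k -> 0 <= A ->
  exists C0, forall C, C0 <= C -> 0 < C /\ (Y / C) ^ 2 * A <= k / 4.
Proof.
  intros Hk HA. exists (Rmax 1 (4 * Y ^ 2 * A / k)). intros C HC.
  pose proof (Rmax_l 1 (4 * Y ^ 2 * A / k)). pose proof (Rmax_r 1 (4 * Y ^ 2 * A / k)).
  split; [lra|].
  assert (HYA : 0 <= Y ^ 2 * A) by (apply Rmult_le_pos; [apply pow2_ge_0 | exact HA]).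
  assert (Y ^ 2 * A <= k / 4 * C).
  { apply (Rmult_le_reg_l (4 / k)); [apply Rdiv_lt_0_compat; lra|].
    replace (4 / k * (k / 4 * C)) with C by (field; lra).
    replace (4 / k * (Y ^ 2 * A)) with (4 * Y ^ 2 * A / k) by (field; lra). lra. }
  replace ((Y / C) ^ 2 * A) with (Y ^ 2 * A / C / C) by (field; lra).
  apply (Rmult_le_reg_r C); [lra|]. replace (Y ^ 2 * A / C / C * C) with (Y ^ 2 * A / C) by (field; lra).
  apply (Rmult_le_reg_r C); [lra|]. replace (Y ^ 2 * A / C * C) with (Y ^ 2 * A) by (field; lra).
  nra.
Qed.

Theorem lemma9 (H G : nat) (a : nat -> nat -> C) (kappa : nat -> nat -> C) :
  (forall h, (1 <= h <= H + G)%nat -> Spoly_arith (a h) /\ Ramanujan (a h)) ->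
  (forall h g, (1 <= h <= H + G)%nat -> (1 <= g <= H + G)%nat ->
     prime_corr_limit (a h) (a g) (kappa h g)) ->
  (forall h, (1 <= h <= H + G)%nat -> 0 < Re (kappa h h)) ->
  (forall h g, (1 <= h <= H + G)%nat -> (1 <= g <= H + G)%nat -> h <> g ->
     kappa h g = RtoC 0) ->
  forall alpha beta : R, 0 < alpha < 1 -> 0 < beta < alpha / 2 ->
  exists eps0 C0 : R, 0 < eps0 /\
  forall eps Cc xe : R, 0 < eps < eps0 -> C0 <= Cc ->
    good_xeps H G a kappa eps xe ->
  forall sigma : R, 0 < sigma <= 1 ->
  exists B : nat -> R, (forall h, (1 <= h <= H + G)%nat -> 0 < B h) /\
  exists T0 : R, forall T : R, T0 <= T ->
  forall h, (1 <= h <= H + G)%nat ->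
    jsign H h * Ssum H G a Cc xe beta T h sigma <=
      (if Rlt_dec sigma 1
       then - B h * (Rpower (ln T) (1 - sigma) / ln (ln T))
       else - B h * ln (ln (ln T))).
Proof.
  intros Hsp Hcorr Hpos Hoff alpha beta _ Hbeta.
  destruct (bound_upto (fun g D => forall p, prime.prime p = true -> Cmod (a g p) <= D) (H + G))
    as [D HD].
  { intros g Hg. destruct (Hsp g Hg) as [Ha Hr]. destruct (prime_coeff_bounded _ Ha Hr) as [D HD].
    exists D. intros D' HD' p Hp. specialize (HD p Hp). lra. }
  specialize (HD D (Rle_refl D)).
  destruct (bound_upto (fun h C => 0 < C /\ (INR (H + G) * D / C) ^ 2 *
      (Rabs (corr_majorant_density H G kappa h) + 1) <= Re (kappa h h) / 4) (H + G)) as [C0 HC0].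
  { intros h Hh. apply small_for_large_C; [apply Hpos, Hh|].
    pose proof (Rabs_pos (corr_majorant_density H G kappa h)). lra. }
  (* [x_eps] only affects finitely many primes. *)
  exists 1, C0. split; [lra|]. intros eps Cc xe _ HCc _ sigma Hsigma.
  destruct (Psi_ge_growth_rate sigma beta Hsigma ltac:(lra)) as [c [Hc HPsi]].
  exists (fun h => Re (kappa h h) * c / (4 * Cc)). split.
  { intros h Hh. destruct (HC0 Cc HCc h Hh) as [HC _].
    apply Rdiv_lt_0_compat; [apply Rmult_lt_0_compat; [apply Hpos, Hh | exact Hc] | lra]. }
  assert (Hunif : Rbar_locally p_infty (fun T => forall h, (1 <= h <= H + G)%nat ->
    jsign H h * Ssum H G a Cc xe beta T h sigma
      <= - (Re (kappa h h) * c / (4 * Cc)) * growth_rate sigma T)).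
  { apply filter_forall_upto. intros h Hh. destruct (HC0 Cc HCc h Hh) as [HC Hsmall].
    apply jsign_Ssum_le_rate with D; auto; lra. }
  destruct Hunif as [M HM]. exists (M + 1). intros T HT h Hh. specialize (HM T ltac:(lra) h Hh).
  unfold growth_rate in HM. destruct (Rlt_dec sigma 1); exact HM.
Qed.
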